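(* Let $V\subset\mathbb{R}^d$ be a finite antichain and let $g\in S_V$ be a generated point which has two minimal generating sets of different cardinalities. Then there exist three minima $x,u,v\in D_g$ and two coordinates $i\neq j$ such that $u_i<v_i=x_i=g_i$ and $v_j<u_j=x_j=g_j$.
   Context: For $x,y\in\mathbb{R}^d$, $x\le y$ (dominance order) means $x_i\le y_i$ for all $i$; $y\rhd x$ means $y_i>x_i$ for all $i$. The join $x\vee y$ is the componentwise maximum. $V\subset\mathbb{R}^d$ is a finite antichain in the dominance order; its elements are called minima. The orthogonal surface $S_V$ is the topological boundary of $\langle V\rangle=\{x: x\ge v\text{ for some }v\in V\}$; equivalently $p\in S_V$ iff there is $v\in V$ with $v\le p$ and there is no $w\in V$ with $p\rhd w$. For $p\in S_V$ let $D_p=\{v\in V: v\le p\}$. A generated point is a point $p\in S_V$ with $p=\bigvee G$ for some nonempty $G\subseteq V$ (then $G\subseteq D_p$); such a $G$ is a generating set for $p$, and it is minimal if $\bigvee(G\setminus\{v\})\neq p$ for every $v\in G$. *)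

From HB Require Import structures.
From mathcomp Require Import all_boot all_order all_algebra.
From mathcomp Require Import finmap.
From mathcomp Require Import reals.
Set Implicit Arguments. Unset Strict Implicit. Unset Printing Implicit Defensive.
Import Order.TTheory GRing.Theory Num.Theory.
Local Open Scope ring_scope.
Local Open Scope fset_scope.

Section OrthSurface.
Variables (R : realType) (d : nat).
Notation pt := 'rV[R]_d.

Definition dom_le (x y : pt) : bool := [forall i : 'I_d, x 0 i <= y 0 i].
Definition dom_gt (y x : pt) : bool := [forall i : 'I_d, x 0 i < y 0 i].

Definition antichain (V : {fset pt}) : Prop :=
  forall v w, v \in V -> w \in V -> dom_le v w -> v = w.

Definition on_surface (V : {fset pt}) (p : pt) : Prop :=
  (exists2 v, v \in V & dom_le v p) /\ ~ (exists2 w, w \in V & dom_gt p w).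

Definition Dset (V : {fset pt}) (p : pt) : {fset pt} := [fset v in V | dom_le v p].

Definition is_join (G : {fset pt}) (p : pt) : Prop :=
  G != fset0 /\
  forall i : 'I_d, (forall v, v \in G -> v 0 i <= p 0 i) /\
                   (exists2 v, v \in G & v 0 i = p 0 i).

Definition generating_set (V : {fset pt}) (p : pt) (G : {fset pt}) : Prop :=
  G `<=` V /\ G != fset0 /\ is_join G p.

Definition generated_point (V : {fset pt}) (p : pt) : Prop :=
  on_surface V p /\ exists G, generating_set V p G.

Definition minimal_generating_set (V : {fset pt}) (p : pt) (G : {fset pt}) : Prop :=
  generating_set V p G /\ forall v, v \in G -> ~ is_join (G `\ v) p.

End OrthSurface.

From HB Require Import structures.
From mathcomp Require Import all_boot all_order all_algebra.
From mathcomp Require Import finmap.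
From mathcomp Require Import reals.
From Stdlib Require Import Classical.
Set Implicit Arguments. Unset Strict Implicit. Unset Printing Implicit Defensive.
Import Order.TTheory GRing.Theory Num.Theory.
Local Open Scope ring_scope.
Local Open Scope fset_scope.

(* In a minimal generating set G of g with at least two elements, every w has
   a private coordinate: w alone attains g there, otherwise G \ w would still
   generate g. Send each w of G1 to some element of G2 attaining g at a
   private coordinate of w. If #|G1| > #|G2| two distinct w, w' of G1 share
   an image z, and z, w', w with the private coordinates of w and w' form the
   required configuration. *)

Lemma leq_card_fset_rel (T U : choiceType) (A : {fset T}) (B : {fset U})
    (r : T -> U -> bool) :
  {in A, forall a, has (r a) B} ->
  {in A &, forall a a', {in B, forall b, r a b -> r a' b -> a = a'}} ->
  (#|` A| <= #|` B|)%N.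
Proof.
move=> rAB r_inj; pose f a := find (r a) B.
have f_inj : {in A &, injective f}.
  move=> a a' aA a'A eq_f; have /hasP[b _ _] := rAB a aA.
  apply: (r_inj a a' aA a'A (nth b B (f a))).
  - by rewrite mem_nth // -has_find rAB.
  - by rewrite nth_find ?rAB.
  - by rewrite eq_f nth_find ?rAB.
rewrite -(size_map f A) -(size_iota 0 (size B)).
apply: uniq_leq_size; first by rewrite map_inj_in_uniq ?fset_uniq.
by move=> _ /mapP[a aA ->]; rewrite mem_iota add0n -has_find rAB.
Qed.

Section PrivateCoordinates.
Variables (R : realType) (d : nat) (V : {fset 'rV[R]_d}) (g : 'rV[R]_d).
Notation pt := 'rV[R]_d.

Definition crossing_triple : Prop :=
  exists x u v : pt,
    [/\ x \in Dset V g, u \in Dset V g & v \in Dset V g] /\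
    exists i j : 'I_d, i != j /\
      [/\ u 0 i < v 0 i, v 0 i = x 0 i & x 0 i = g 0 i] /\
      [/\ v 0 j < u 0 j, u 0 j = x 0 j & x 0 j = g 0 j].

Definition private_coord (G : {fset pt}) (w : pt) (i : 'I_d) : bool :=
  (w 0 i == g 0 i) && all (fun w' : pt => (w' 0 i == g 0 i) ==> (w' == w)) G.

Lemma private_coordP G w i : private_coord G w i ->
  w 0 i = g 0 i /\ forall w', w' \in G -> w' 0 i = g 0 i -> w' = w.
Proof.
case/andP=> /eqP wi /allP privG; split=> // w' /privG /implyP w'_w /eqP.
by move/w'_w/eqP.
Qed.

Lemma Dset_le w i : w \in Dset V g -> w 0 i <= g 0 i.
Proof. by rewrite inE => /andP[_ /forallP]. Qed.

Lemma generating_set_sub_Dset G : generating_set V g G -> G `<=` Dset V g.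
Proof.
case=> GV [_ [_ joinG]]; apply/fsubsetP=> w wG.
rewrite !inE (fsubsetP GV w wG); apply/forallP=> i.
by have [-> //] := joinG i.
Qed.

Lemma minimal_generating_set_private G w :
  minimal_generating_set V g G -> (1 < #|` G|)%N -> w \in G ->
  exists i, private_coord G w i.
Proof.
move=> [[_ [_ [_ joinG]]] minG] G_gt1 wG.
apply: NNPP => no_priv; apply: (minG w wG); split.
  by apply/eqP=> Gw0; move: G_gt1; rewrite (cardfsD1 w) Gw0 wG cardfs0.
move=> i; have [leG [v vG vi]] := joinG i; split.
  by move=> v' /fsetD1P[_ /leG].
have [vw|vw] := eqVneq v w; last by exists v; rewrite ?inE ?vw.
subst w.
have : ~~ private_coord G v i by apply/negP=> privw; apply: no_priv; exists i.
rewrite /private_coord vi eqxx /= => /allPn[w' w'G].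
by rewrite negb_imply => /andP[/eqP w'i w'w]; exists w'; rewrite ?inE ?w'w.
Qed.

Lemma shared_attainer_crossing G w w' z i i' :
  G `<=` Dset V g -> w \in G -> w' \in G -> w != w' -> z \in Dset V g ->
  private_coord G w i -> private_coord G w' i' ->
  z 0 i = g 0 i -> z 0 i' = g 0 i' -> crossing_triple.
Proof.
move=> /fsubsetP GD wG w'G ww' zD /private_coordP[wi privw]
  /private_coordP[w'i' privw'] zi zi'.
have w'i : w' 0 i != g 0 i by apply: contra_neq ww' => /(privw w' w'G) ->.
have wi' : w 0 i' != g 0 i' by apply: contra_neq ww' => /(privw' w wG).
exists z, w', w; split; first by rewrite zD !GD.
exists i, i'; split; first by apply: contra_neq w'i => ->; rewrite w'i'.
by rewrite wi w'i' zi zi' !lt_neqAle w'i wi' !Dset_le ?GD.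
Qed.

Lemma card_minimal_generating_set_le G1 G2 :
  ~ crossing_triple ->
  minimal_generating_set V g G1 -> generating_set V g G2 ->
  (1 < #|` G1|)%N -> (#|` G1| <= #|` G2|)%N.
Proof.
move=> no_cross minG1 genG2 G1_gt1.
have G1D := generating_set_sub_Dset minG1.1.
have G2D := generating_set_sub_Dset genG2.
pose r w (z : pt) := [exists i, private_coord G1 w i && (z 0 i == g 0 i)].
apply: (@leq_card_fset_rel _ _ G1 G2 r).
  move=> w wG1; have [i privw] := minimal_generating_set_private minG1 G1_gt1 wG1.
  have [_ [_ [_ /(_ i)[_ [z zG2 zi]]]]] := genG2.
  by apply/hasP; exists z => //; apply/existsP; exists i; rewrite privw zi eqxx.
move=> w w' wG1 w'G1 z zG2 /existsP[i /andP[privw /eqP zi]].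
move=> /existsP[i' /andP[privw' /eqP zi']].
apply: NNPP => ww'; apply: no_cross.
have zD := fsubsetP G2D z zG2.
by apply: (shared_attainer_crossing G1D wG1 w'G1 _ zD privw privw' zi zi'); apply/eqP.
Qed.

Lemma minimal_generating_sets_crossing G1 G2 :
  minimal_generating_set V g G1 -> minimal_generating_set V g G2 ->
  (#|` G2| < #|` G1|)%N -> crossing_triple.
Proof.
move=> minG1 minG2 lt_G2G1; apply: NNPP => no_cross.
have G1_gt1 : (1 < #|` G1|)%N.
  by apply: leq_ltn_trans lt_G2G1; rewrite lt0n cardfs_eq0; case: minG2 => [[_ []]].
have := card_minimal_generating_set_le no_cross minG1 minG2.1 G1_gt1.
by rewrite leqNgt lt_G2G1.
Qed.

End PrivateCoordinates.

Theorem lemma4p1 (R : realType) (d : nat) (V : {fset 'rV[R]_d}) (g : 'rV[R]_d)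
    (G1 G2 : {fset 'rV[R]_d}) :
  antichain V ->
  generated_point V g ->
  minimal_generating_set V g G1 ->
  minimal_generating_set V g G2 ->
  #|` G1 | <> #|` G2 | ->
  exists x u v : 'rV[R]_d,
    [/\ x \in Dset V g, u \in Dset V g & v \in Dset V g] /\
    exists i j : 'I_d, i != j /\
      [/\ u 0 i < v 0 i, v 0 i = x 0 i & x 0 i = g 0 i] /\
      [/\ v 0 j < u 0 j, u 0 j = x 0 j & x 0 j = g 0 j].
Proof.
move=> _ _ minG1 minG2 neq_card.
have [lt_G1G2|lt_G2G1|//] := ltngtP #|` G1| #|` G2|.
- exact: (minimal_generating_sets_crossing minG2 minG1).
- exact: (minimal_generating_sets_crossing minG1 minG2).
Qed.
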